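(* Every weakly-reversible chemical reaction network that has a critical siphon is catalytic.
   Context: A chemical reaction network (CRN) consists of positive integers $s$ (species) and $n$ (complexes), a finite directed graph $G$ with vertex set $\{1,\dots,n\}$ and edge set $E(G)$, and an injective labeling of vertex $i$ by a monic monomial $\psi_i=\prod_{j=1}^s x_j^{y_{ij}}$, $y_i=(y_{i1},\dots,y_{is})\in\mathbb{Z}_{\ge0}^s$. $G$ is weakly-reversible iff each connected component is strongly connected. The stoichiometric subspace $S_G\subseteq\mathbb{R}^s$ is the span of $\{y_i-y_j : (i,j)\in E(G)\}$; for $x\in\mathbb{R}^s_{\ge0}$ the invariant polyhedron containing $x$ is $(x+S_G)\cap\mathbb{R}^s_{\ge0}$. A nonempty $Z\subseteq\{1,\dots,s\}$ is a siphon iff for every $(i,j)\in E(G)$, if $x_k\mid\psi_j$ for some $k\in Z$ then $x_l\mid\psi_i$ for some $l\in Z$. A siphon $Z$ is critical iff there is $z\in\mathbb{R}^s_{\ge0}$ with $Z=\{i : z_i=0\}$ such that the invariant polyhedron containing $z$ meets $\mathbb{R}^s_{>0}$. The event-graph $\overline{G}$ has as vertices all monic monomials in $x_1,\dots,x_s$, with an edge $(N\psi_i,N\psi_j)$ for each $(i,j)\in E(G)$ and each monic monomial $N$. A weakly-reversible CRN is catalytic iff there exist monic monomials $M,N$ path-connected in $\overline{G}$ such that $M/\gcd(M,N)$ and $N/\gcd(M,N)$ are not path-connected in $\overline{G}$. *)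

From Stdlib Require Import Reals Relation_Operators.
From HB Require Import structures.
From mathcomp Require Import all_boot all_order all_algebra.
From mathcomp Require Import Rstruct.

Set Implicit Arguments.
Unset Strict Implicit.
Unset Printing Implicit Defensive.

Import Order.TTheory GRing.Theory Num.Theory.

(* A monic monomial prod_k x_k^(e k) in the variables x_0, ..., x_{s-1}
   is represented by its exponent vector e : 'I_s -> nat. *)
Definition monomial (s : nat) := {ffun 'I_s -> nat}.

(* A CRN: species 'I_s, complexes (vertices) 'I_n, edge relation E on 'I_n,
   labelling y : 'I_n -> monomial s (y i = exponent vector y_i of psi_i). *)

Definition symrel (n : nat) (E : rel 'I_n) : rel 'I_n :=
  fun i j => E i j || E j i.

Definition weakly_reversible (n : nat) (E : rel 'I_n) : Prop :=
  forall i j : 'I_n, connect (symrel E) i j -> connect E i j.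

Definition divides_var (s : nat) (k : 'I_s) (M : monomial s) : bool :=
  (0 < M k)%N.

Definition siphon (s n : nat) (E : rel 'I_n) (y : 'I_n -> monomial s)
    (Z : {set 'I_s}) : Prop :=
  Z != set0 /\
  forall i j : 'I_n, E i j ->
    (exists2 k, k \in Z & divides_var k (y j)) ->
    (exists2 l, l \in Z & divides_var l (y i)).

Definition in_stoich_subspace (s n : nat) (E : rel 'I_n)
    (y : 'I_n -> monomial s) (v : 'I_s -> R) : Prop :=
  exists c : 'I_n -> 'I_n -> R,
    forall k : 'I_s,
      v k = (\sum_(i : 'I_n) \sum_(j : 'I_n | E i j)
               c i j * ((y i k)%:R - (y j k)%:R))%R.

Definition polyhedron_meets_positive (s n : nat) (E : rel 'I_n)
    (y : 'I_n -> monomial s) (x : 'I_s -> R) : Prop :=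
  exists p : 'I_s -> R,
    in_stoich_subspace E y (fun k => (p k - x k)%R) /\
    (forall k, (0 <= p k)%R) /\
    (forall k, (0 < p k)%R).

Definition critical_siphon (s n : nat) (E : rel 'I_n)
    (y : 'I_n -> monomial s) (Z : {set 'I_s}) : Prop :=
  siphon E y Z /\
  exists z : 'I_s -> R,
    (forall k, (0 <= z k)%R) /\
    (forall k, z k = 0%R <-> k \in Z) /\
    polyhedron_meets_positive E y z.

Definition event_edge (s n : nat) (E : rel 'I_n) (y : 'I_n -> monomial s)
    (M M' : monomial s) : Prop :=
  exists (i j : 'I_n) (N : monomial s),
    E i j /\ M = [ffun k => N k + y i k] /\ M' = [ffun k => N k + y j k].

(* M and N are path-connected in the event-graph (a path, ignoring edge
   orientation; under weak reversibility this coincides with directed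
   reachability). *)
Definition event_connected (s n : nat) (E : rel 'I_n)
    (y : 'I_n -> monomial s) : monomial s -> monomial s -> Prop :=
  clos_refl_sym_trans (monomial s) (event_edge E y).

Definition mdiv_gcd (s : nat) (M N : monomial s) : monomial s :=
  [ffun k => M k - minn (M k) (N k)].

Definition catalytic (s n : nat) (E : rel 'I_n) (y : 'I_n -> monomial s)
    : Prop :=
  exists M N : monomial s,
    event_connected E y M N /\
    ~ event_connected E y (mdiv_gcd M N) (mdiv_gcd N M).

(* Write the positive point of the invariant polyhedron as p = z + v with v in
   the stoichiometric subspace; since z vanishes on the critical siphon Z, v is
   positive on Z.  Scaling the real coefficients of v by a large factor and
   rounding them down yields an integer combination u of reaction vectors that
   is still positive on Z, and every such integer combination is the
   difference A - B of two monomials connected in the event-graph.  After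
   cancelling gcd(A, B), the quotient B / gcd is free of the species of Z while
   A / gcd is not; but a siphon of a weakly-reversible network makes the set of
   Z-free monomials a union of connected components of the event-graph, so the
   two quotients are not connected. *)
From Stdlib Require Import Reals Relation_Operators.
From HB Require Import structures.
From mathcomp Require Import all_boot all_order all_algebra.
From mathcomp Require Import Rstruct zify.

Set Implicit Arguments.
Unset Strict Implicit.
Unset Printing Implicit Defensive.

Import Order.TTheory GRing.Theory Num.Theory.
Local Open Scope ring_scope.

Section IntegerApproximation.

Variables (F : archiRealFieldType) (I : finType) (P : pred I) (s : nat).
Variables (a : I -> 'I_s -> F) (c : I -> F).

Lemma floor_comb_ge (t : F) (k : 'I_s) :
  t * (\sum_(e | P e) c e * a e k) - \sum_(e | P e) `|a e k| <=
  \sum_(e | P e) (Num.floor (t * c e))%:~R * a e k.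
Proof.
rewrite mulr_sumr -sumrB ler_sum // => e _.
rewrite lerBlDr -lerBlDl mulrA -mulrBl.
apply: le_trans (ler_norm _) _; rewrite normrM ler_piMl //.
have lt_floor := floorD1_gt (t * c e); rewrite rmorphD /= in lt_floor.
by rewrite ger0_norm ?subr_ge0 ?floor_le // lerBlDl ltW.
Qed.

Lemma exists_int_comb_gt0 (Z : {set 'I_s}) :
  (forall k, k \in Z -> 0 < \sum_(e | P e) c e * a e k) ->
  exists d : I -> int, forall k, k \in Z -> 0 < \sum_(e | P e) (d e)%:~R * a e k.
Proof.
move=> v_gt0; pose v k := \sum_(e | P e) c e * a e k.
pose B k := \sum_(e | P e) `|a e k|.
have B_ge0 k : 0 <= B k by rewrite sumr_ge0.
pose t := 1 + \sum_(k in Z) B k / v k.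
exists (fun e => Num.floor (t * c e)) => k kZ.
apply: lt_le_trans (floor_comb_ge t k); rewrite subr_gt0.
have vk_gt0 := v_gt0 k kZ.
have Bv_le : B k / v k <= \sum_(l in Z) B l / v l.
  rewrite (bigD1 k) //= lerDl sumr_ge0 // => l /andP[lZ _].
  by rewrite divr_ge0 ?B_ge0 ?ltW ?v_gt0.
have : (1 + B k / v k) * v k <= t * v k by rewrite ler_pM2r // lerD2l Bv_le.
by rewrite mulrDl mul1r divfK ?gt_eqF //; apply: lt_le_trans; rewrite ltrDr.
Qed.

End IntegerApproximation.

Definition madd (s : nat) (A B : monomial s) : monomial s :=
  [ffun k => (A k + B k)%N].

Lemma maddC (s : nat) : commutative (@madd s).
Proof. by move=> A B; apply/ffunP => k; rewrite !ffunE addnC. Qed.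

Section EventGraph.

Variables (s n : nat) (E : rel 'I_n) (y : 'I_n -> monomial s).

Local Notation connected := (event_connected E y).

Lemma event_connected_maddr (A B C : monomial s) :
  connected A B -> connected (madd A C) (madd B C).
Proof.
elim=> [M M' [i [j [N [Eij [-> ->]]]]] | M | M M' _ IH | M1 M2 M3 _ IH1 _ IH2].
- apply: rst_step; exists i, j, (madd N C).
  by split=> //; split; apply/ffunP => k; rewrite !ffunE addnAC.
- exact: rst_refl.
- exact: rst_sym.
- exact: rst_trans IH1 IH2.
Qed.

Definition realizable (w : {ffun 'I_s -> int}) :=
  exists A B : monomial s, connected A B /\ forall k, (A k)%:Z - (B k)%:Z = w k.

Lemma realizable0 : realizable 0.
Proof.
exists [ffun=> 0%N], [ffun=> 0%N]; split; first exact: rst_refl.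
by move=> k; rewrite !ffunE subrr.
Qed.

Lemma realizableD w1 w2 : realizable w1 -> realizable w2 -> realizable (w1 + w2).
Proof.
move=> [A1 [B1 [conn1 eq1]]] [A2 [B2 [conn2 eq2]]].
exists (madd A1 A2), (madd B1 B2); split.
  apply: rst_trans (event_connected_maddr A2 conn1) _.
  by rewrite (maddC B1 A2) (maddC B1 B2); apply: event_connected_maddr.
by move=> k; rewrite !ffunE -eq1 -eq2 !PoszD; lia.
Qed.

Lemma realizableN w : realizable w -> realizable (- w).
Proof.
move=> [A [B [conn eqw]]]; exists B, A; split; first exact: rst_sym.
by move=> k; rewrite !ffunE -eqw; lia.
Qed.

Lemma realizableMz w z : realizable w -> realizable (w *~ z).
Proof.
move=> rw; have rwMn m : realizable (w *+ m).
  elim: m => [|m IH]; first by rewrite mulr0n; apply: realizable0.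
  by rewrite mulrS; apply: realizableD.
by case: z => m /=; [|apply: realizableN]; apply: rwMn.
Qed.

Definition reaction_vector (i j : 'I_n) : {ffun 'I_s -> int} :=
  [ffun k => (y i k)%:Z - (y j k)%:Z].

Lemma realizable_reaction i j : E i j -> realizable (reaction_vector i j).
Proof.
move=> Eij; exists (y i), (y j); split=> [|k]; last by rewrite ffunE.
apply: rst_step; exists i, j, [ffun=> 0%N].
by split=> //; split; apply/ffunP => k; rewrite !ffunE.
Qed.

Lemma realizable_int_comb (d : 'I_n * 'I_n -> int) :
  realizable (\sum_(e | E e.1 e.2) reaction_vector e.1 e.2 *~ d e).
Proof.
apply: (big_ind realizable realizable0 realizableD) => e Ee.
exact/realizableMz/realizable_reaction.
Qed.

Definition vanishes_on (Z : {set 'I_s}) (M : monomial s) :=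
  forall k, k \in Z -> M k = 0%N.

Lemma vanishes_on_madd Z (A B : monomial s) :
  vanishes_on Z (madd A B) <-> vanishes_on Z A /\ vanishes_on Z B.
Proof.
split=> [AB0 | [A0 B0] k kZ]; last by rewrite ffunE A0 ?B0.
by split=> k kZ; have := AB0 k kZ; rewrite ffunE; lia.
Qed.

Variable Z : {set 'I_s}.
Hypothesis siphonZ : siphon E y Z.

Lemma siphon_vanishes_step i j :
  E i j -> vanishes_on Z (y i) -> vanishes_on Z (y j).
Proof.
move=> Eij yi0 k kZ; apply/eqP; rewrite -leqn0 leqNgt; apply/negP => yjk_gt0.
have [l lZ] := siphonZ.2 i j Eij (ex_intro2 _ _ k kZ yjk_gt0).
by rewrite /divides_var yi0.
Qed.

Lemma siphon_vanishes_connect i j :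
  connect E i j -> vanishes_on Z (y i) -> vanishes_on Z (y j).
Proof.
move=> /connectP[p + ->]; elim: p i => [|h p IH] i //= /andP[Eih pth] yi0.
exact: IH pth (siphon_vanishes_step Eih yi0).
Qed.

(* Weak reversibility lets the siphon property also propagate backwards
   along an edge of G. *)
Lemma event_connected_vanishes_on (M N : monomial s) :
  weakly_reversible E -> connected M N ->
  vanishes_on Z M -> vanishes_on Z N.
Proof.
move=> wrE conn; suff : vanishes_on Z M <-> vanishes_on Z N by case.
elim: conn => [M1 M2 [i [j [N0 [Eij [-> ->]]]]] | | | ]; try tauto.
have back : vanishes_on Z (y j) -> vanishes_on Z (y i).
  by apply/siphon_vanishes_connect/wrE/connect1; rewrite /symrel Eij orbT.
have fwd := siphon_vanishes_step Eij.
rewrite -[[ffun k => _ + y i k]%N]/(madd N0 (y i)).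
rewrite -[[ffun k => _ + y j k]%N]/(madd N0 (y j)) !vanishes_on_madd.
tauto.
Qed.

End EventGraph.

Theorem theorem4p1 (s n : nat) (E : rel 'I_n) (y : 'I_n -> monomial s) :
  (0 < s)%N -> (0 < n)%N ->
  injective y ->
  weakly_reversible E ->
  (exists Z : {set 'I_s}, critical_siphon E y Z) ->
  catalytic E y.
Proof.
move=> _ _ _ wrE [Z [siphonZ [z [_ [zZ [p [[c pc] [_ p_gt0]]]]]]]].
pose a (e : 'I_n * 'I_n) k : R := (y e.1 k)%:R - (y e.2 k)%:R.
have v_gt0 k : k \in Z -> 0 < \sum_(e | E e.1 e.2) c e.1 e.2 * a e k.
  move=> kZ; rewrite -(pair_big_dep xpredT E (fun i j => c i j * a (i, j) k)) /=.
  by rewrite -pc (zZ k).2 // subr0.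
have [d u_gt0] := exists_int_comb_gt0 v_gt0.
have [A [B [connAB AB]]] := realizable_int_comb E y d.
have uE k : ((\sum_(e | E e.1 e.2) reaction_vector y e.1 e.2 *~ d e) k)%:~R =
    \sum_(e | E e.1 e.2) (d e)%:~R * a e k :> R.
  rewrite sum_ffunE rmorph_sum; apply: eq_bigr => e _.
  by rewrite ffunMzE ffunE mulrzz rmorphM rmorphB /= mulrC.
have B_lt_A k : k \in Z -> (B k < A k)%N.
  by move=> kZ; have := u_gt0 k kZ; rewrite -uE ltr0z -AB; lia.
exists A, B; split=> // connQ.
have [/set0Pn[k kZ] _] := siphonZ.
have BA0 : vanishes_on Z (mdiv_gcd B A).
  by move=> l lZ; rewrite ffunE; have := B_lt_A l lZ; lia.
have := event_connected_vanishes_on siphonZ wrE (rst_sym _ _ _ _ connQ) BA0 kZ.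
by rewrite ffunE; have := B_lt_A k kZ; lia.
Qed.
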